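(* Let $A,B_1,\ldots,B_m\in\mathbb{C}^{d\times d}$, let $\{\xi_{n,k}: n\ge 1,\ 1\le k\le m\}$ be independent real-valued random variables with $\mathbb{E}\xi_{n,k}=0$ and $\mathbb{E}\xi_{n,k}^2=1$, and let $\mathbf{u},\mathbf{v}\in\mathbb{C}^d$ be non-random. Define $\mathbb{C}^d$-valued random sequences by \[ \mathbf{x}(n+1)=A\mathbf{x}(n)+\sum_{k=1}^m B_k\mathbf{x}(n)\xi_{n+1,k},\ \mathbf{x}(0)=\mathbf{u};\qquad \mathbf{y}(n+1)=A\mathbf{y}(n)+\sum_{k=1}^m B_k\mathbf{y}(n)\xi_{n+1,k},\ \mathbf{y}(0)=\mathbf{v}. \] Let $V(n)=\mathbb{E}\,\mathbf{x}(n)\mathbf{y}^*(n)$, $\mathbf{U}(n)=\mathrm{vec}(V(n))$ and $r_x(n)=\mathbb{E}|\mathbf{x}(n)|^2$. Then \[ \mathbf{U}(n)=D_{A,B}^n\,\mathbf{U}(0),\qquad D_{A,B}=\overline{A}\otimes A+\sum_{k=1}^m\overline{B}_k\otimes B_k, \] and \[ |\mathbf{u}|^2\gamma^n\le r_x(n)\le |\mathbf{u}|^2\beta^n \quad\text{for all } n\ge 0, \] where $\gamma$ and $\beta$ are the smallest and largest eigenvalues of the non-negative Hermitian matrix $N_{A,B}=A^*A+\sum_{k=1}^m B_k^*B_k$.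
   Context: For $X\in\mathbb{C}^{d\times d}$, $\mathrm{vec}(X)\in\mathbb{C}^{d^2}$ is the column vector obtained by stacking the columns of $X$ left to right: $(X_{11},\ldots,X_{d1},X_{12},\ldots,X_{d2},\ldots,X_{1d},\ldots,X_{dd})^\top$. $\overline{X}$ is entrywise conjugate, $X^*$ conjugate transpose, $\otimes$ the Kronecker product, $|\cdot|$ the Euclidean norm. *)

From mathcomp Require Import all_boot all_order all_algebra.
From mathcomp Require Import all_classical all_reals all_analysis.
From mathcomp Require Export complex mxtens.
Set Implicit Arguments. Unset Strict Implicit. Unset Printing Implicit Defensive.
Import Order.TTheory GRing.Theory Num.Theory.
Local Open Scope ring_scope.
Local Open Scope complex_scope.
Local Open Scope classical_set_scope.

Section Defs.
Context {R : realType} {dm : measure_display} {T : measurableType dm}.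

Definition mutually_independent {I : eqType} (P : probability T R) (S : pred I)
  (X : I -> T -> R) : Prop :=
  forall (J : seq I) (B : I -> set R), uniq J -> all S J ->
    (forall i, measurable (B i)) ->
    P [set t | forall i, i \in J -> B i (X i t)] =
    (\prod_(i <- J) P [set t | B i (X i t)])%E.

Definition cexpect (P : probability T R) (f : T -> R[i]) : R[i] :=
  (Rintegral P setT (fun t => complex.Re (f t))) +i* (Rintegral P setT (fun t => complex.Im (f t))).

Fixpoint sproc {d m : nat} (A : 'M[R[i]]_d) (B : 'I_m -> 'M[R[i]]_d)
  (xi : nat -> 'I_m -> T -> R) (u : 'cV[R[i]]_d) (n : nat) : T -> 'cV[R[i]]_d :=
  match n with
  | 0 => fun _ => u
  | n'.+1 => fun t => A *m sproc A B xi u n' t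
              + \sum_(k < m) (xi n'.+1 k t)%:C *: (B k *m sproc A B xi u n' t)
  end.

Definition Vmat {d : nat} (P : probability T R) (x y : nat -> T -> 'cV[R[i]]_d)
  (n : nat) : 'M[R[i]]_d :=
  \matrix_(i, j) cexpect P (fun t => x n t i 0 * (y n t j 0)^*).

End Defs.

Definition vnorm2 {R : rcfType} {d : nat} (v : 'cV[R[i]]_d) : R :=
  \sum_(i < d) ((complex.Re (v i 0)) ^+ 2 + (complex.Im (v i 0)) ^+ 2).

Definition conjmx {R : rcfType} {p q : nat} (M : 'M[R[i]]_(p, q)) := map_mx conjc M.
Definition ctrmx {R : rcfType} {p q : nat} (M : 'M[R[i]]_(p, q)) := (conjmx M)^T.

(* vec: stack the columns; entry of index j*d+i (= mxtens_index (j,i)) is X i j. *)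
Definition vec {R : Type} {d : nat} (X : 'M[R]_d) : 'cV[R]_(d * d) :=
  \col_k X (mxtens_unindex k).2 (mxtens_unindex k).1.

Definition DAB {R : rcfType} {d m : nat} (A : 'M[R[i]]_d) (B : 'I_m -> 'M[R[i]]_d)
  : 'M[R[i]]_(d * d) :=
  conjmx A *t A + \sum_(k < m) conjmx (B k) *t B k.

Definition NAB {R : rcfType} {d m : nat} (A : 'M[R[i]]_d) (B : 'I_m -> 'M[R[i]]_d)
  : 'M[R[i]]_d :=
  ctrmx A *m A + \sum_(k < m) ctrmx (B k) *m B k.

(* Expanding the recursion, x(n) = sum_w xi_w M_w u over the words w = (a_n, ..., a_1) in the
   letters {A, B_1, ..., B_m}, where M_w = M_(a_n) ... M_(a_1) and xi_w is the product of the
   noise variables xi_(j,k) for the letters a_j = B_k.  Since the variables are independent,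
   centred and of unit variance, the xi_w are orthonormal in L^2(P), so
   V(n) = sum_w (M_w u)(M_w v)^* and r_x(n) = sum_w |M_w u|^2.  Splitting off the last letter
   gives V(n+1) = sum_a M_a V(n) M_a^*, which vec turns into U(n+1) = D_(A,B) U(n), and
   sum_a |M_a y|^2 = y^* N_(A,B) y lies between gamma |y|^2 and beta |y|^2, which yields the
   geometric bounds on r_x(n) by induction. *)

From Pilot Require Import Defs.
From mathcomp Require Import all_boot all_order all_algebra.
From mathcomp Require Import all_classical all_reals all_analysis.
From mathcomp Require Import complex mxtens.
From mathcomp Require Import finmap measurable_realfun spectral.
From mathcomp Require Import ring.
Set Implicit Arguments. Unset Strict Implicit. Unset Printing Implicit Defensive.
Import Order.TTheory GRing.Theory Num.Theory.
Import HBNNSimple.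
Local Open Scope ring_scope.
Local Open Scope classical_set_scope.

Section integral_comp.
Context d (T : measurableType d) (R : realType) (mu : {measure set T -> \bar R}).

Lemma nnsfun_range_ge0 (s : {nnsfun R >-> R}) i :
  0 <= (fset_set (range s))`_i.
Proof.
have [lt|ge] := ltnP i (size (fset_set (range s))); last by rewrite nth_default.
have := mem_nth 0 lt; rewrite in_fset_set; last exact: fimfunP.
by move=> /set_mem [x _ <-]; exact: fun_ge0.
Qed.

Lemma integral_nnsfun_compM (f H : T -> R) (s : {nnsfun R >-> R}) :
  measurable_fun setT f -> measurable_fun setT H -> (forall t, 0 <= H t) ->
  (\int[mu]_t (s (f t) * H t)%:E =
   \sum_(i < #|` fset_set (range s)|) ((fset_set (range s))`_i)%:E *
     \int[mu]_t ((\1_(s @^-1` [set (fset_set (range s))`_i]) (f t)) * H t)%:E)%E.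
Proof.
move=> mf mH H0; set S := fset_set (range s).
have mB i : measurable (s @^-1` [set S`_i]) by exact: measurable_funPTI.
have mindicf i : measurable_fun setT (fun t => \1_(s @^-1` [set S`_i]) (f t) * H t).
  by apply: measurable_funM => //; exact: measurableT_comp (measurable_indic (mB i)) mf.
transitivity (\int[mu]_t (\sum_(i < #|` S|)
   ((S`_i)%:E * ((\1_(s @^-1` [set S`_i]) (f t)) * H t)%:E)))%E.
  apply: eq_integral => t _; rewrite (fimfunEord s (f t)) big_distrl /= sumEFin.
  by congr EFin; apply: eq_bigr => i _; rewrite mulrA.
rewrite ge0_integral_sum //.
- apply: eq_bigr => i _; rewrite ge0_integralZl_EFin //.
  + by move=> t _; rewrite lee_fin mulr_ge0.
  + exact/measurable_EFinP.
  + exact: nnsfun_range_ge0.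
- by move=> i; apply/measurable_funeM/measurable_EFinP.
- by move=> i t _; rewrite -EFinM lee_fin !mulr_ge0 ?nnsfun_range_ge0.
Qed.

Lemma cvg_integral_nnsfun_compM (g : {nnsfun R >-> R}^nat) (phi : R -> R) (f H : T -> R) :
  (forall x, (g n x)%:E @[n --> \oo] --> (phi x)%:E) ->
  (forall x, {homo g^~ x : n k / (n <= k)%N >-> n <= k}) ->
  measurable_fun setT f -> measurable_fun setT H -> (forall t, 0 <= H t) ->
  (\int[mu]_t (g n (f t) * H t)%:E)%E @[n --> \oo] --> (\int[mu]_t (phi (f t) * H t)%:E)%E.
Proof.
move=> g_cvg g_nd mf mH H_ge0.
have := @cvg_monotone_convergence _ _ _ mu setT measurableT
  (fun n t => (g n (f t) * H t)%:E).
have -> : (fun t => limn ((fun n t => (g n (f t) * H t)%:E)^~ t)) =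
    (fun t => (phi (f t) * H t)%:E).
  apply/funext => t; apply/cvg_lim => //.
  under eq_fun do rewrite EFinM.
  by rewrite EFinM; apply: cvgeZr => //; exact: g_cvg.
apply.
- move=> n; apply/measurable_EFinP; apply: measurable_funM => //.
  exact: measurableT_comp (@measurable_funPT _ _ _ _ (g n)) mf.
- by move=> n t _; rewrite lee_fin mulr_ge0 // fun_ge0.
- by move=> t _ n k nk; rewrite lee_fin ler_wpM2r // g_nd.
Qed.

Section weighted_law.
Variables (f G : T -> R) (c : R).
Hypotheses (mf : measurable_fun setT f) (mG : measurable_fun setT G).
Hypothesis G_ge0 : forall t, 0 <= G t.

(* The hypothesis says that the law of [f] under the measure [G mu] is [c] times its law under [mu]. *)
Hypothesis weighted_indic : forall B, measurable B ->
  (\int[mu]_t ((\1_B (f t)) * G t)%:E = c%:E * mu (f @^-1` B))%E.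

Lemma weighted_integral_nnsfun_comp (s : {nnsfun R >-> R}) :
  (\int[mu]_t (s (f t) * G t)%:E = c%:E * \int[mu]_t (s (f t))%:E)%E.
Proof.
transitivity (c%:E * \int[mu]_t (s (f t) * 1)%:E)%E; last first.
  by under eq_integral do rewrite mulr1.
rewrite !integral_nnsfun_compM // ge0_sume_distrr; last first.
  move=> i _; rewrite mule_ge0 ?lee_fin ?nnsfun_range_ge0 //.
  by apply: integral_ge0 => t _; rewrite lee_fin mulr1.
apply: eq_bigr => i _.
have mB : measurable (s @^-1` [set (fset_set (range s))`_i]).
  exact: measurable_funPTI.
rewrite weighted_indic // muleCA; congr (_ * _)%E.
under eq_integral do rewrite mulr1.
by rewrite -[f @^-1` _]setIT -integral_indic // -[f @^-1` _]setTI; exact: mf.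
Qed.

Lemma weighted_integral_comp (phi : R -> R) :
  measurable_fun setT phi -> (forall x, 0 <= phi x) ->
  (\int[mu]_t (phi (f t) * G t)%:E = c%:E * \int[mu]_t (phi (f t))%:E)%E.
Proof.
move=> mphi phi_ge0.
have mphiE : measurable_fun setT (EFin \o phi) by exact/measurable_EFinP.
pose g := nnsfun_approx measurableT mphiE.
have g_cvg x : (g n x)%:E @[n --> \oo] --> (phi x)%:E.
  by apply: cvg_nnsfun_approx => // y _; rewrite lee_fin.
have g_nd x : {homo g^~ x : n k / (n <= k)%N >-> n <= k}.
  by move=> n k nk; have /lefP := nd_nnsfun_approx measurableT mphiE nk; apply.
have cvgG := cvg_integral_nnsfun_compM g_cvg g_nd mf mG G_ge0.
have cvg1 := cvg_integral_nnsfun_compM g_cvg g_nd mf (measurable_cst (1 : R)) (fun=> ler01).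
under [in RHS]eq_integral do rewrite -[phi _]mulr1.
rewrite -(cvg_lim _ cvgG) // -(cvg_lim _ (cvgeZl (isT : c%:E \is a fin_num) cvg1)) //.
congr (limn _); apply/funext => n; rewrite weighted_integral_nnsfun_comp.
by under [in RHS]eq_integral do rewrite mulr1.
Qed.

End weighted_law.
Lemma integrable_sumR (I : Type) (s : seq I) (F : I -> T -> R) :
  (forall i, mu.-integrable setT (fun t => (F i t)%:E)) ->
  mu.-integrable setT (fun t => (\sum_(i <- s) F i t)%:E).
Proof. by move=> iF; under eq_fun do rewrite -sumEFin; exact: integrable_sum. Qed.

Lemma Rintegral_sumR (I : Type) (s : seq I) (F : I -> T -> R) :
  (forall i, mu.-integrable setT (fun t => (F i t)%:E)) ->
  Rintegral mu setT (fun t => \sum_(i <- s) F i t) = \sum_(i <- s) Rintegral mu setT (F i).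
Proof.
move=> iF; rewrite /Rintegral; under eq_integral do rewrite -sumEFin.
by rewrite integral_sum // sum_fine // => i _; exact: integrable_fin_num.
Qed.

End integral_comp.

Section independence.
Context (R : realType) d (T : measurableType d) (P : probability T R).
Variables (I : eqType) (S : pred I) (X : I -> T -> R).
Hypothesis X_meas : forall i, S i -> measurable_fun setT (X i).
Hypothesis X_indep : mutually_independent P S X.

Definition indic_prod (L : seq (I * set R)) t : R :=
  \prod_(p <- L) (\1_(p.2) (X p.1 t) : R).

Definition comp_prod (L : seq (I * (R -> R))) t : R :=
  \prod_(p <- L) p.2 (X p.1 t).

Definition lookup_set (L : seq (I * set R)) (i : I) : set R :=
  foldr (fun p acc => if p.1 == i then p.2 else acc) setT L.

Lemma lookup_setE (L : seq (I * set R)) p :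
  uniq (map fst L) -> p \in L -> lookup_set L p.1 = p.2.
Proof.
elim: L => [//|q L IH] /= /andP[qL uL]; rewrite in_cons => /orP[/eqP->|pL].
  by rewrite eqxx.
case: eqP => [qp|_]; last exact: IH.
by move: qL; rewrite qp => /negP; case; apply/mapP; exists p.
Qed.

Lemma measurable_lookup_set (L : seq (I * set R)) i :
  {in L, forall p, measurable p.2} -> measurable (lookup_set L i).
Proof.
elim: L => [|q L IH] mL /=; first exact: measurableT.
case: ifP => _; first by apply: mL; rewrite mem_head.
by apply: IH => p pL; apply: mL; rewrite in_cons pL orbT.
Qed.

Lemma indic_prodE (L : seq (I * set R)) : uniq (map fst L) ->
  indic_prod L = \1_[set t | forall i, i \in map fst L -> lookup_set L i (X i t)].
Proof.
move=> uL; apply/funext => t; rewrite indicE /indic_prod.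
have [allL|nallL] := pselect (forall p, p \in L -> p.2 (X p.1 t)).
  rewrite mem_set; last by move=> i /mapP[p pL ->]; rewrite lookup_setE //; exact: allL.
  by rewrite big1_seq // => p /andP[_ pL]; rewrite indicE mem_set //; exact: allL.
rewrite memNset; last first.
  move=> Lt; apply: nallL => p pL; rewrite -(lookup_setE uL pL); apply: Lt.
  exact: map_f.
have [p pL np] : exists2 p, p \in L & ~ p.2 (X p.1 t).
  by apply: contra_notP nallL => H p pL; apply: contra_notP H => np; exists p.
by rewrite (big_rem p) //= indicE memNset // mul0r.
Qed.

Lemma measurable_indic_prod (L : seq (I * set R)) :
  all S (map fst L) -> {in L, forall p, measurable p.2} ->
  measurable_fun setT (indic_prod L).
Proof.
move=> SL mL; apply: measurable_prod => p pL.
apply: measurableT_comp (measurable_indic (mL p pL)) (X_meas _).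
by apply: (allP SL); exact: map_f.
Qed.

Lemma measurable_comp_prod (L : seq (I * (R -> R))) :
  all S (map fst L) -> {in L, forall p, measurable_fun setT p.2} ->
  measurable_fun setT (comp_prod L).
Proof.
move=> SL mL; apply: measurable_prod => p pL.
by apply: measurableT_comp (mL p pL) (X_meas _); apply: (allP SL); exact: map_f.
Qed.

Lemma measurable_X_preimage i B : S i -> measurable B -> measurable (X i @^-1` B).
Proof. by move=> Si mB; rewrite -[A in measurable A]setTI; exact: (X_meas Si measurableT mB). Qed.

Lemma expectation_indic_prod (L : seq (I * set R)) :
  uniq (map fst L) -> all S (map fst L) -> {in L, forall p, measurable p.2} ->
  (\int[P]_t (indic_prod L t)%:E =
   (\prod_(p <- L) fine (P [set t | p.2 (X p.1 t)]))%:E)%E.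
Proof.
move=> uL SL mL.
have mXL p : p \in L -> measurable [set t | p.2 (X p.1 t)].
  by move=> pL; apply: measurable_X_preimage (mL p pL); apply: (allP SL); exact: map_f.
have mE : measurable [set t | forall i, i \in map fst L -> lookup_set L i (X i t)].
  by apply/(measurable_indicP R); rewrite -indic_prodE //; exact: measurable_indic_prod.
rewrite indic_prodE // integral_indic // setIT.
transitivity (\prod_(i <- map fst L) P [set t | lookup_set L i (X i t)])%E.
  by apply: X_indep => // i; exact: measurable_lookup_set.
rewrite big_map -prodEFin; apply: eq_big_seq => p pL.
rewrite (lookup_setE uL pL) fineK // fin_num_measure //; exact: mXL.
Qed.

Definition integrable_factor (p : I * (R -> R)) :=
  measurable_fun setT p.2 /\ P.-integrable setT (fun t => (p.2 (X p.1 t))%:E).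

Definition ge0_integrable_factor (p : I * (R -> R)) :=
  [/\ measurable_fun setT p.2, forall x, 0 <= p.2 x &
       P.-integrable setT (fun t => (p.2 (X p.1 t))%:E)].

Lemma comp_prod_ge0 (L : seq (I * (R -> R))) t :
  {in L, forall p, ge0_integrable_factor p} -> 0 <= comp_prod L t.
Proof. by move=> hL; rewrite /comp_prod big_seq; apply: prodr_ge0 => p /hL[]. Qed.

(* Induction on [L1]: by the induction hypothesis, the law of the head variable under the
   density given by the remaining factors is a multiple of its law. *)
Lemma expectation_ge0_comp_prodM_indic_prod (L1 : seq (I * (R -> R))) (L2 : seq (I * set R)) :
  uniq (map fst L1 ++ map fst L2) -> all S (map fst L1 ++ map fst L2) ->
  {in L1, forall p, ge0_integrable_factor p} ->
  {in L2, forall p, measurable p.2} ->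
  (\int[P]_t (comp_prod L1 t * indic_prod L2 t)%:E =
   ((\prod_(p <- L1) Rintegral P setT (fun t => p.2 (X p.1 t))) *
     \prod_(p <- L2) fine (P [set t | p.2 (X p.1 t)]))%:E)%E.
Proof.
elim: L1 L2 => [|[i phi] L1 IH] L2 uL SL hL1 mL2.
  rewrite big_nil mul1r -expectation_indic_prod //.
  by apply: eq_integral => t _; rewrite /comp_prod big_nil mul1r.
have Si : S i by move: SL => /= /andP[].
have [mphi phi_ge0 iphi] := hL1 (i, phi) (mem_head _ _).
have hL1' : {in L1, forall p, ge0_integrable_factor p}.
  by move=> p pL; apply: hL1; rewrite in_cons pL orbT.
have SL12 : all S (map fst L1) && all S (map fst L2) by rewrite -all_cat; case/andP: SL.
pose G t := comp_prod L1 t * indic_prod L2 t.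
have mG : measurable_fun setT G.
  case/andP: SL12 => SL1 SL2; apply: measurable_funM; last exact: measurable_indic_prod.
  by apply: measurable_comp_prod => // p /hL1'[].
have G_ge0 t : 0 <= G t.
  by rewrite mulr_ge0 ?comp_prod_ge0 // /indic_prod; apply: prodr_ge0 => p _; rewrite indicE.
pose c := (\prod_(p <- L1) Rintegral P setT (fun t => p.2 (X p.1 t))) *
     \prod_(p <- L2) fine (P [set t | p.2 (X p.1 t)]).
have weighted B : measurable B ->
    (\int[P]_t ((\1_B (X i t)) * G t)%:E = c%:E * P (X i @^-1` B))%E.
  move=> mB.
  transitivity (\int[P]_t (comp_prod L1 t * indic_prod ((i, B) :: L2) t)%:E)%E.
    by apply: eq_integral => t _; rewrite /indic_prod big_cons /= /G mulrCA.
  rewrite IH.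
  - have PB : P (X i @^-1` B) = (fine (P [set t | B (X i t)]))%:E.
      by rewrite fineK // fin_num_measure //; exact: measurable_X_preimage.
    by rewrite big_cons /= PB -EFinM /c; congr EFin; ring.
  - by move: uL; rewrite /= -cat1s uniq_catCA.
  - by move: SL; rewrite /= !all_cat /= => /and3P[-> -> ->].
  - exact: hL1'.
  - by move=> p; rewrite in_cons => /orP[/eqP->//|]; exact: mL2.
have := weighted_integral_comp (X_meas Si) mG G_ge0 weighted mphi phi_ge0.
have -> : (\int[P]_t (phi (X i t))%:E = (Rintegral P setT (fun t => phi (X i t)))%:E)%E.
  by rewrite fineK //; exact: integrable_fin_num.
rewrite -EFinM => weighted_phi.
transitivity (\int[P]_t (phi (X i t) * G t)%:E)%E.
  by apply: eq_integral => t _; rewrite /comp_prod big_cons /= /G -mulrA.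
by rewrite weighted_phi big_cons /= /c; congr EFin; ring.
Qed.

Lemma integrable_expectation_ge0_comp_prod (L : seq (I * (R -> R))) :
  uniq (map fst L) -> all S (map fst L) ->
  {in L, forall p, ge0_integrable_factor p} ->
  P.-integrable setT (fun t => (comp_prod L t)%:E) /\
  Rintegral P setT (comp_prod L) = \prod_(p <- L) Rintegral P setT (fun t => p.2 (X p.1 t)).
Proof.
move=> uL SL hL.
have E : (\int[P]_t (comp_prod L t)%:E =
    (\prod_(p <- L) Rintegral P setT (fun t => p.2 (X p.1 t)))%:E)%E.
  transitivity (\int[P]_t (comp_prod L t * indic_prod [::] t)%:E)%E.
    by apply: eq_integral => t _; rewrite /indic_prod big_nil mulr1.
  by rewrite expectation_ge0_comp_prodM_indic_prod ?cats0 // big_nil mulr1.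
have L_ge0 t : 0 <= comp_prod L t by exact: comp_prod_ge0.
split; last by rewrite /Rintegral E.
apply/integrableP; split; first by apply/measurable_EFinP/measurable_comp_prod => // p /hL[].
under eq_integral do rewrite abse_EFin ger0_norm //.
by rewrite E ltry.
Qed.

Lemma ge0_integrable_factor_funrpos i phi :
  integrable_factor (i, phi) -> ge0_integrable_factor (i, phi^\+).
Proof.
case=> /= mphi iphi; split => //=; first exact: measurable_funrpos.
by have := integrable_funepos measurableT iphi; rewrite (funerpos (phi \o X i)).
Qed.

Lemma ge0_integrable_factor_funrneg i phi :
  integrable_factor (i, phi) -> ge0_integrable_factor (i, phi^\-).
Proof.
case=> /= mphi iphi; split => //=; first exact: measurable_funrneg.
by have := integrable_funeneg measurableT iphi; rewrite (funerneg (phi \o X i)).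
Qed.

(* Induction on [L2]: splitting its head factor into positive and negative parts moves it to [L1]. *)
Lemma integrable_expectation_comp_prodM (L2 L1 : seq (I * (R -> R))) :
  uniq (map fst L1 ++ map fst L2) -> all S (map fst L1 ++ map fst L2) ->
  {in L1, forall p, ge0_integrable_factor p} ->
  {in L2, forall p, integrable_factor p} ->
  P.-integrable setT (fun t => (comp_prod L1 t * comp_prod L2 t)%:E) /\
  Rintegral P setT (fun t => comp_prod L1 t * comp_prod L2 t) =
   (\prod_(p <- L1) Rintegral P setT (fun t => p.2 (X p.1 t))) *
   (\prod_(p <- L2) Rintegral P setT (fun t => p.2 (X p.1 t))).
Proof.
elim: L2 L1 => [|[i phi] L2 IH] L1 uL SL hL1 hL2.
  rewrite cats0 in uL SL; rewrite big_nil mulr1.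
  under eq_fun do rewrite /comp_prod big_nil mulr1.
  under eq_Rintegral do rewrite /comp_prod big_nil mulr1.
  exact: integrable_expectation_ge0_comp_prod.
have Si : S i by apply: (allP SL); rewrite mem_cat /= in_cons eqxx orbT.
have hphi := hL2 (i, phi) (mem_head _ _).
have hL2' : {in L2, forall p, integrable_factor p}.
  by move=> p pL; apply: hL2; rewrite in_cons pL orbT.
have hL1_cons psi : ge0_integrable_factor (i, psi) ->
    {in (i, psi) :: L1, forall p, ge0_integrable_factor p}.
  by move=> hpsi p; rewrite in_cons => /orP[/eqP->//|]; exact: hL1.
have uL' psi : uniq (map fst ((i, psi) :: L1) ++ map fst L2).
  by move: uL; rewrite /= -cat1s uniq_catCA.
have SL' psi : all S (map fst ((i, psi) :: L1) ++ map fst L2).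
  by move: SL; rewrite /= !all_cat /= Si.
have [iP EP] := IH _ (uL' _) (SL' _) (hL1_cons _ (ge0_integrable_factor_funrpos hphi)) hL2'.
have [iN EN] := IH _ (uL' _) (SL' _) (hL1_cons _ (ge0_integrable_factor_funrneg hphi)) hL2'.
have split_phi t : comp_prod L1 t * comp_prod ((i, phi) :: L2) t =
    comp_prod ((i, phi^\+) :: L1) t * comp_prod L2 t -
    comp_prod ((i, phi^\-) :: L1) t * comp_prod L2 t.
  by rewrite /comp_prod !big_cons /= -[phi in phi (X i t)]funrposBneg !fctE; ring.
under eq_fun do rewrite split_phi.
under eq_Rintegral do rewrite split_phi.
split; first exact: (integrableB measurableT iP iN).
have Ephi : Rintegral P setT (fun t => phi (X i t)) =
    Rintegral P setT (fun t => phi^\+ (X i t)) - Rintegral P setT (fun t => phi^\- (X i t)).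
  have [_ _ ipos] := ge0_integrable_factor_funrpos hphi.
  have [_ _ ineg] := ge0_integrable_factor_funrneg hphi.
  rewrite -RintegralB //; apply: eq_Rintegral => t _.
  by rewrite -[in LHS](funrposBneg phi).
by rewrite RintegralB // EP EN !big_cons /= Ephi; ring.
Qed.

Lemma integrable_expectation_comp_prod (L : seq (I * (R -> R))) :
  uniq (map fst L) -> all S (map fst L) -> {in L, forall p, integrable_factor p} ->
  P.-integrable setT (fun t => (comp_prod L t)%:E) /\
  Rintegral P setT (comp_prod L) = \prod_(p <- L) Rintegral P setT (fun t => p.2 (X p.1 t)).
Proof.
move=> uL SL hL.
have nil_ge0 : {in [::], forall p, ge0_integrable_factor p} by [].
have [iL EL] := @integrable_expectation_comp_prodM L [::] uL SL nil_ge0 hL.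
have comp_prod_nilM t : comp_prod [::] t * comp_prod L t = comp_prod L t.
  by rewrite /comp_prod big_nil mul1r.
split; first by apply: eq_integrable measurableT _ _ _ iL => t _; rewrite comp_prod_nilM.
by rewrite -(eq_Rintegral _ (fun t _ => comp_prod_nilM t)) EL big_nil mul1r.
Qed.

End independence.

(* The letter [None] stands for [A] and [Some k] for [B_k]; the head of a word is its last step. *)
Fixpoint word (m n : nat) : finType :=
  if n is n'.+1 then (option 'I_m * word m n')%type else unit.

Lemma sum_option (V : zmodType) m (F : option 'I_m -> V) :
  \sum_(a : option 'I_m) F a = F None + \sum_(k < m) F (Some k).
Proof.
rewrite (bigD1 None) //=; congr (_ + _).
rewrite (reindex_omap Some id) /=; last by case.
by apply: eq_bigl => k; rewrite eqxx.
Qed.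

Lemma sum_unit (V : zmodType) (F : unit -> V) : \sum_(a : unit) F a = F tt.
Proof. by rewrite (big_pred1 tt) //; case. Qed.

Lemma sum_word_succ (V : zmodType) m n (F : word m n.+1 -> V) :
  \sum_(w : word m n.+1) F w = \sum_(a : option 'I_m) \sum_(w : word m n) F (a, w).
Proof. by rewrite pair_big /=; apply: eq_bigr; case. Qed.

Section noise_words.
Context (R : realType) dm (T : measurableType dm) (P : probability T R).
Variables (m : nat) (xi : nat -> 'I_m -> T -> R).
Hypothesis xi_meas : forall n k, (0 < n)%N -> measurable_fun setT (xi n k).
Hypothesis xi_indep : mutually_independent P (fun nk : nat * 'I_m => (0 < nk.1)%N)
  (fun nk => xi nk.1 nk.2).
Hypothesis xi_int : forall n k, (0 < n)%N -> P.-integrable setT (fun t => (xi n k t)%:E).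
Hypothesis xi_int2 : forall n k, (0 < n)%N -> P.-integrable setT (fun t => (xi n k t ^+ 2)%:E).
Hypothesis xi_mean : forall n k, (0 < n)%N -> Rintegral P setT (xi n k) = 0.
Hypothesis xi_var : forall n k, (0 < n)%N -> Rintegral P setT (fun t => xi n k t ^+ 2) = 1.

Local Notation xi_of := (fun nk : nat * 'I_m => xi nk.1 nk.2).

Let xi_of_meas nk : (0 < nk.1)%N -> measurable_fun setT (xi_of nk).
Proof. exact: xi_meas. Qed.

Definition moment (b : bool) (x : R) := if b then x ^+ 2 else x.

Lemma expectation_moment_prod (L : seq ((nat * 'I_m) * bool)) :
  uniq (map fst L) -> all (fun nk => 0 < nk.1)%N (map fst L) ->
  P.-integrable setT (fun t => (\prod_(p <- L) moment p.2 (xi_of p.1 t))%:E) /\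
  Rintegral P setT (fun t => \prod_(p <- L) moment p.2 (xi_of p.1 t)) =
    \prod_(p <- L) p.2%:R.
Proof.
move=> uL pL.
pose L' := map (fun p => (p.1, moment p.2)) L.
have funL' t : comp_prod xi_of L' t = \prod_(p <- L) moment p.2 (xi_of p.1 t).
  by rewrite /comp_prod big_map.
have [|||iL EL] := integrable_expectation_comp_prod xi_of_meas xi_indep (L := L').
- by rewrite /L' -map_comp.
- by rewrite /L' -map_comp.
- move=> _ /mapP[[nk b] nkL ->] /=.
  have nk_pos : (0 < nk.1)%N by apply: (allP pL); exact: (map_f fst nkL).
  case: b {nkL}; split => /=; [|exact: xi_int2|exact: measurable_id|exact: xi_int].
  by apply: measurable_funX; exact: measurable_id.
split; first by apply: eq_integrable measurableT _ _ _ iL => t _; rewrite funL'.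
rewrite -(eq_Rintegral _ (fun t _ => funL' t)) EL big_map big_seq [RHS]big_seq.
apply: eq_bigr => -[nk b] nkL; have nk_pos : (0 < nk.1)%N.
  by apply: (allP pL); exact: (map_f fst nkL).
by case: b {nkL} => /=; [exact: xi_var|exact: xi_mean].
Qed.

Definition noise_letter (j : nat) (a : option 'I_m) (t : T) : R :=
  if a is Some k then xi j k t else 1.

Fixpoint noise_word (n : nat) : word m n -> T -> R :=
  match n return word m n -> T -> R with
  | 0 => fun _ _ => 1
  | n'.+1 => fun w t => noise_letter n'.+1 w.1 t * noise_word w.2 t
  end.

Definition letter_moments (j : nat) (a b : option 'I_m) : seq ((nat * 'I_m) * bool) :=
  match a, b with
  | None, None => [::]
  | Some k, None | None, Some k => [:: ((j, k), false)]
  | Some k, Some l => if k == l then [:: ((j, k), true)]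
                      else [:: ((j, k), false); ((j, l), false)]
  end.

Fixpoint word_moments (n : nat) : word m n -> word m n -> seq ((nat * 'I_m) * bool) :=
  match n return word m n -> word m n -> seq ((nat * 'I_m) * bool) with
  | 0 => fun _ _ => [::]
  | n'.+1 => fun w w' => letter_moments n'.+1 w.1 w'.1 ++ word_moments w.2 w'.2
  end.

Lemma letter_momentsE j a b t :
  \prod_(p <- letter_moments j a b) moment p.2 (xi_of p.1 t) =
  noise_letter j a t * noise_letter j b t.
Proof.
case: a => [k|]; case: b => [l|] /=; rewrite ?big_cons ?big_nil /= ?mulr1 ?mul1r //.
by case: eqP => [<-|_]; rewrite !big_cons ?big_nil /= ?mulr1 ?expr2.
Qed.

Lemma letter_moments_eq j a b :
  \prod_(p <- letter_moments j a b) (p.2%:R : R) = (a == b)%:R.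
Proof.
case: a => [k|]; case: b => [l|] /=; rewrite ?big_cons ?big_nil /= ?mul0r //.
case: eqP => [<-|kl]; rewrite !big_cons ?big_nil /= ?mulr1 ?mul0r ?eqxx //.
by case: eqP => // -[].
Qed.

Lemma letter_moments_vars j a b :
  all (fun nk => nk.1 == j) (map fst (letter_moments j a b)) &&
  uniq (map fst (letter_moments j a b)).
Proof.
case: a => [k|]; case: b => [l|] //=; rewrite ?eqxx //.
case: eqP => [_|kl] /=; rewrite ?eqxx //= andbT inE.
by apply/negP => /eqP[/eqP]; rewrite (introF eqP kl).
Qed.

Lemma word_momentsE n (w w' : word m n) t :
  \prod_(p <- word_moments w w') moment p.2 (xi_of p.1 t) =
  noise_word w t * noise_word w' t.
Proof.
elim: n w w' => [|n IH] w w' /=; first by rewrite big_nil mulr1.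
by rewrite big_cat /= letter_momentsE IH; ring.
Qed.

Lemma word_moments_eq n (w w' : word m n) :
  \prod_(p <- word_moments w w') (p.2%:R : R) = (w == w')%:R.
Proof.
elim: n w w' => [|n IH] w w' /=; first by case: w; case: w'; rewrite big_nil.
case: w => a w; case: w' => b w' /=; rewrite big_cat /= letter_moments_eq IH xpair_eqE.
by rewrite -natrM mulnb.
Qed.

Lemma word_moments_vars n (w w' : word m n) :
  all (fun nk => 0 < nk.1 <= n)%N (map fst (word_moments w w')) &&
  uniq (map fst (word_moments w w')).
Proof.
elim: n w w' => [|n IH] w w' //=.
have /andP[IHa IHu] := IH w.2 w'.2.
have /andP[Ba Bu] := letter_moments_vars n.+1 w.1 w'.1.
rewrite map_cat all_cat cat_uniq Bu IHu andbT -andbA; apply/and3P; split.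
- by apply/allP => nk /(allP Ba) /eqP ->; rewrite /= leqnn.
- by apply/allP => nk /(allP IHa) /andP[-> /leqW].
- apply/hasPn => nk /(allP IHa) /andP[_ nkn]; apply/negP => /(allP Ba) /eqP nkE.
  by move: nkn; rewrite nkE ltnn.
Qed.

Lemma noise_word_orthonormal n (w w' : word m n) :
  P.-integrable setT (fun t => (noise_word w t * noise_word w' t)%:E) /\
  Rintegral P setT (fun t => noise_word w t * noise_word w' t) = (w == w')%:R.
Proof.
have /andP[vars uniq_vars] := word_moments_vars w w'.
have pos_vars : all (fun nk => 0 < nk.1)%N (map fst (word_moments w w')).
  by apply/allP => nk /(allP vars) /andP[].
have [iw Ew] := expectation_moment_prod uniq_vars pos_vars.
split; first by apply: eq_integrable measurableT _ _ _ iw => t _; rewrite word_momentsE.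
rewrite -word_moments_eq -Ew; apply: eq_Rintegral => t _; by rewrite word_momentsE.
Qed.

Lemma integrable_expectation_noise_combinationM n (a b : word m n -> R) :
  P.-integrable setT (fun t =>
    ((\sum_w noise_word w t * a w) * (\sum_w noise_word w t * b w))%:E) /\
  Rintegral P setT (fun t => (\sum_w noise_word w t * a w) * (\sum_w noise_word w t * b w)) =
  \sum_w a w * b w.
Proof.
pose F w w' t := noise_word w t * noise_word w' t * (a w * b w').
have expandE t : (\sum_w noise_word w t * a w) * (\sum_w noise_word w t * b w) =
    \sum_w \sum_w' F w w' t.
  rewrite mulr_suml; apply: eq_bigr => w _; rewrite mulr_sumr.
  by apply: eq_bigr => w' _; rewrite /F; ring.
have iF w w' : P.-integrable setT (fun t => (F w w' t)%:E).
  have [iw _] := noise_word_orthonormal w w'.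
  by apply: eq_integrable measurableT _ _ _ (integrableZr measurableT (a w * b w') iw) => t _; rewrite /= EFinM.
have EF w w' : Rintegral P setT (F w w') = (w == w')%:R * (a w * b w').
  have [iw <-] := noise_word_orthonormal w w'; exact: RintegralZr.
under eq_fun do rewrite expandE.
under eq_Rintegral do rewrite expandE.
split; first by do 2 apply: integrable_sumR => ?.
rewrite Rintegral_sumR; last by move=> w; apply: integrable_sumR.
apply: eq_bigr => w _; rewrite Rintegral_sumR // (bigD1 w) //= big1 ?addr0.
  by rewrite EF eqxx mul1r.
by move=> w' ww'; rewrite EF eq_sym (negbTE ww') mul0r.
Qed.

End noise_words.

Local Open Scope complex_scope.

Section complex_parts.
Context (R : realType).
Implicit Types (x y z : R[i]).

Lemma Re_sum (I : Type) (s : seq I) (F : I -> R[i]) :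
  complex.Re (\sum_(i <- s) F i) = \sum_(i <- s) complex.Re (F i).
Proof. exact: (raddf_sum (@complex.Re R : Rcomplex R -> R)). Qed.

Lemma Im_sum (I : Type) (s : seq I) (F : I -> R[i]) :
  complex.Im (\sum_(i <- s) F i) = \sum_(i <- s) complex.Im (F i).
Proof. exact: (raddf_sum (@complex.Im R : Rcomplex R -> R)). Qed.

Lemma Re_realM (r : R) z : complex.Re (r%:C * z) = r * complex.Re z.
Proof. by case: z => a b /=; ring. Qed.

Lemma Im_realM (r : R) z : complex.Im (r%:C * z) = r * complex.Im z.
Proof. by case: z => a b /=; ring. Qed.

Lemma Re_mulJ x y : complex.Re (x * y^*) =
  complex.Re x * complex.Re y + complex.Im x * complex.Im y.
Proof. by case: x => a b; case: y => c e /=; ring. Qed.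

Lemma Im_mulJ x y : complex.Im (x * y^*) =
  complex.Im x * complex.Re y - complex.Re x * complex.Im y.
Proof. by case: x => a b; case: y => c e /=; ring. Qed.

Lemma complexE z : z = complex.Re z +i* complex.Im z.
Proof. by case: z. Qed.

End complex_parts.

Section word_matrices.
Context (R : realType) (d m : nat) (A : 'M[R[i]]_d) (B : 'I_m -> 'M[R[i]]_d).

Definition mx_letter (a : option 'I_m) := if a is Some k then B k else A.

Fixpoint mx_word (n : nat) : word m n -> 'M[R[i]]_d :=
  match n return word m n -> 'M[R[i]]_d with
  | 0 => fun _ => 1%:M
  | n'.+1 => fun w => mx_letter w.1 *m mx_word w.2
  end.

Lemma sproc_expansion dm (T : measurableType dm) (xi : nat -> 'I_m -> T -> R)
    (u : 'cV[R[i]]_d) n t :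
  sproc A B xi u n t = \sum_(w : word m n) (noise_word xi w t)%:C *: (mx_word w *m u).
Proof.
elim: n => [|n IH] /=; first by rewrite sum_unit /= scale1r mul1mx.
rewrite sum_word_succ sum_option IH /=; congr (_ + _).
  rewrite mulmx_sumr; apply: eq_bigr => w _.
  by rewrite mul1r -scalemxAr mulmxA.
apply: eq_bigr => k _; rewrite mulmx_sumr scaler_sumr; apply: eq_bigr => w _.
by rewrite -scalemxAr scalerA -rmorphM mulmxA.
Qed.

End word_matrices.

Section second_moments.
Context (R : realType) dm (T : measurableType dm) (P : probability T R).
Variables (m : nat) (xi : nat -> 'I_m -> T -> R).
Hypothesis xi_meas : forall n k, (0 < n)%N -> measurable_fun setT (xi n k).
Hypothesis xi_indep : mutually_independent P (fun nk : nat * 'I_m => (0 < nk.1)%N)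
  (fun nk => xi nk.1 nk.2).
Hypothesis xi_int : forall n k, (0 < n)%N -> P.-integrable setT (fun t => (xi n k t)%:E).
Hypothesis xi_int2 : forall n k, (0 < n)%N -> P.-integrable setT (fun t => (xi n k t ^+ 2)%:E).
Hypothesis xi_mean : forall n k, (0 < n)%N -> Rintegral P setT (xi n k) = 0.
Hypothesis xi_var : forall n k, (0 < n)%N -> Rintegral P setT (fun t => xi n k t ^+ 2) = 1.
Variables (d : nat) (A : 'M[R[i]]_d) (B : 'I_m -> 'M[R[i]]_d).

Local Notation combination := (integrable_expectation_noise_combinationM
  xi_meas xi_indep xi_int xi_int2 xi_mean xi_var).
Local Notation mx_word := (mx_word A B).

Lemma Re_sproc (u : 'cV[R[i]]_d) n t i :
  complex.Re (sproc A B xi u n t i 0) =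
  \sum_(w : word m n) noise_word xi w t * complex.Re ((mx_word w *m u) i 0).
Proof.
rewrite sproc_expansion summxE Re_sum; apply: eq_bigr => w _.
by rewrite mxE Re_realM.
Qed.

Lemma Im_sproc (u : 'cV[R[i]]_d) n t i :
  complex.Im (sproc A B xi u n t i 0) =
  \sum_(w : word m n) noise_word xi w t * complex.Im ((mx_word w *m u) i 0).
Proof.
rewrite sproc_expansion summxE Im_sum; apply: eq_bigr => w _.
by rewrite mxE Im_realM.
Qed.

Lemma Vmat_expansion (u v : 'cV[R[i]]_d) n :
  Vmat P (sproc A B xi u) (sproc A B xi v) n =
  \sum_(w : word m n) (mx_word w *m u) *m ctrmx (mx_word w *m v).
Proof.
apply/matrixP => i j; rewrite !mxE summxE /cexpect.
pose c (w : word m n) := (mx_word w *m u) i 0.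
pose e (w : word m n) := (mx_word w *m v) j 0.
have -> : \sum_(w : word m n) ((mx_word w *m u) *m ctrmx (mx_word w *m v)) i j =
    \sum_w c w * (e w)^*.
  by apply: eq_bigr => w _; rewrite mxE big_ord1 /ctrmx /Defs.conjmx !mxE /c /e !mxE.
rewrite [RHS]complexE Re_sum Im_sum; congr Complex.
- under eq_Rintegral do rewrite Re_mulJ !Re_sproc !Im_sproc.
  have [i1 E1] := combination (fun w => complex.Re (c w)) (fun w => complex.Re (e w)).
  have [i2 E2] := combination (fun w => complex.Im (c w)) (fun w => complex.Im (e w)).
  rewrite RintegralD // E1 E2 -big_split /=; apply: eq_bigr => w _.
  by rewrite Re_mulJ.
- under eq_Rintegral do rewrite Im_mulJ !Re_sproc !Im_sproc.
  have [i1 E1] := combination (fun w => complex.Im (c w)) (fun w => complex.Re (e w)).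
  have [i2 E2] := combination (fun w => complex.Re (c w)) (fun w => complex.Im (e w)).
  rewrite RintegralB // E1 E2 -sumrB /=; apply: eq_bigr => w _.
  by rewrite Im_mulJ.
Qed.

Lemma second_moment_expansion (u : 'cV[R[i]]_d) n :
  Rintegral P setT (fun t => vnorm2 (sproc A B xi u n t)) =
  \sum_(w : word m n) vnorm2 (mx_word w *m u).
Proof.
pose a i (w : word m n) := complex.Re ((mx_word w *m u) i 0).
pose b i (w : word m n) := complex.Im ((mx_word w *m u) i 0).
pose X (c : word m n -> R) t := \sum_w noise_word xi w t * c w.
have vnormE t : vnorm2 (sproc A B xi u n t) =
    \sum_(i < d) (X (a i) t * X (a i) t + X (b i) t * X (b i) t).
  by apply: eq_bigr => i _; rewrite Re_sproc Im_sproc !expr2.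
have integrable_sq i : P.-integrable setT
    (fun t => (X (a i) t * X (a i) t + X (b i) t * X (b i) t)%:E).
  have [i1 _] := combination (a i) (a i); have [i2 _] := combination (b i) (b i).
  by apply: eq_integrable measurableT _ _ _ (integrableD measurableT i1 i2) => t _; rewrite EFinD.
under eq_Rintegral do rewrite vnormE.
rewrite Rintegral_sumR // exchange_big; apply: eq_bigr => i _.
have [i1 E1] := combination (a i) (a i); have [i2 E2] := combination (b i) (b i).
rewrite RintegralD // E1 E2 -big_split; apply: eq_bigr => w _.
by rewrite !expr2.
Qed.

End second_moments.

(* [Defs.conjmx] is qualified because mxalgebra's [conjmx] (conjugation by a matrix) shadows it. *)
Section conj_transpose.
Context (R : rcfType).

Lemma ctrmx_mul p q r (M : 'M[R[i]]_(p, q)) (N : 'M[R[i]]_(q, r)) :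
  ctrmx (M *m N) = ctrmx N *m ctrmx M.
Proof. by rewrite /ctrmx /Defs.conjmx map_mxM trmx_mul. Qed.

Lemma ctrmxK p q (M : 'M[R[i]]_(p, q)) : ctrmx (ctrmx M) = M.
Proof. by apply/matrixP => i j; rewrite !mxE conjcK. Qed.

Lemma ctrmx_sum p q (I : Type) (s : seq I) (F : I -> 'M[R[i]]_(p, q)) :
  ctrmx (\sum_(i <- s) F i) = \sum_(i <- s) ctrmx (F i).
Proof.
apply: (big_morph _ _ _) => [M N|]; apply/matrixP => i j; rewrite !mxE ?rmorphD //.
exact: conjc0.
Qed.

Lemma ctrmxE p q (M : 'M[R[i]]_(p, q)) : ctrmx M = (M ^t*)%sesqui.
Proof. by rewrite /ctrmx /Defs.conjmx map_trmx. Qed.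

Lemma mul_conjc_self (z : R[i]) :
  z^* * z = (complex.Re z ^+ 2 + complex.Im z ^+ 2)%:C.
Proof.
by case: z => a b; apply/eqP; rewrite eq_complex /=; apply/andP; split; apply/eqP; ring.
Qed.

Lemma ctrmx_mul_self d (y : 'cV[R[i]]_d) : (ctrmx y *m y) 0 0 = (vnorm2 y)%:C.
Proof.
rewrite !mxE /vnorm2 rmorph_sum; apply: eq_bigr => i _.
by rewrite !mxE mul_conjc_self.
Qed.

Lemma vnorm2_ge0 d (y : 'cV[R[i]]_d) : 0 <= vnorm2 y.
Proof. by apply: sumr_ge0 => i _; rewrite addr_ge0 // sqr_ge0. Qed.

Lemma vnorm2_eq0 d (y : 'cV[R[i]]_d) : vnorm2 y = 0 -> y = 0.
Proof.
move=> /eqP; rewrite psumr_eq0; last by move=> i _; rewrite addr_ge0 // sqr_ge0.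
move=> /allP y0; apply/matrixP => i j; rewrite ord1 mxE.
have := y0 i (mem_index_enum _).
rewrite paddr_eq0 ?sqr_ge0 // !sqrf_eq0 => /andP[/eqP yRe /eqP yIm].
by case: (y i 0) yRe yIm => /= ? ? -> ->.
Qed.

Lemma lec_real (a b : R) : (a%:C <= b%:C) = (a <= b).
Proof. by rewrite lecE /= eqxx. Qed.

End conj_transpose.

Section vec_kron.
Context (R : rcfType) (d : nat).

Lemma vec_sum (I : Type) (s : seq I) (F : I -> 'M[R[i]]_d) :
  vec (\sum_(i <- s) F i) = \sum_(i <- s) vec (F i).
Proof. by apply: (big_morph _ _ _) => [X Y|]; apply/matrixP => i j; rewrite !mxE. Qed.

(* [vec] is column-stacking, so it turns [X |-> M X M^*] into [conj M (x) M]. *)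
Lemma vec_conj_mul (M X : 'M[R[i]]_d) :
  vec (M *m X *m ctrmx M) = (Defs.conjmx M *t M) *m vec X.
Proof.
apply/matrixP => k z; rewrite ord1 {z}.
case: (mxtens_indexP k) => a b.
rewrite !mxE mxtens_indexK /=.
rewrite (reindex (@mxtens_index d d)) /=; last first.
  by exists (@mxtens_unindex d d) => l _; rewrite (mxtens_indexK, mxtens_unindexK).
transitivity (\sum_q \sum_p (Defs.conjmx M *t M) (mxtens_index (a, b)) (mxtens_index (q, p))
   * vec X (mxtens_index (q, p)) 0); last by rewrite pair_big; apply: eq_bigr => -[q p].
apply: eq_bigr => q _; rewrite !mxE mulr_suml; apply: eq_bigr => p _.
by rewrite !mxE !mxtens_indexK /= mulrC mulrA.
Qed.

End vec_kron.

Section covariance_recursion.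
Context (R : realType) (d m : nat) (A : 'M[R[i]]_d) (B : 'I_m -> 'M[R[i]]_d).
Local Notation mx_word := (mx_word A B).
Local Notation mx_letter := (mx_letter A B).

Definition word_covariance (u v : 'cV[R[i]]_d) n :=
  \sum_(w : word m n) (mx_word w *m u) *m ctrmx (mx_word w *m v).

Lemma word_covarianceS u v n :
  word_covariance u v n.+1 = \sum_a mx_letter a *m word_covariance u v n *m ctrmx (mx_letter a).
Proof.
rewrite /word_covariance sum_word_succ; apply: eq_bigr => a _.
rewrite mulmx_sumr mulmx_suml; apply: eq_bigr => w _ /=.
by rewrite -!mulmxA ctrmx_mul !mulmxA.
Qed.

Lemma vec_word_covariance u v n :
  vec (word_covariance u v n) = DAB A B ^+ n *m vec (word_covariance u v 0).
Proof.
elim: n => [|n IH]; first by rewrite expr0 mul1mx.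
rewrite word_covarianceS vec_sum exprS -mulmxE -mulmxA -IH /DAB.
rewrite sum_option mulmxDl mulmx_suml vec_conj_mul; congr (_ + _).
by apply: eq_bigr => k _; rewrite vec_conj_mul.
Qed.

End covariance_recursion.

Section rayleigh.
Context (R : rcfType) (d : nat) (N : 'M[R[i]]_d) (gamma beta : R).
Hypothesis N_normal : N \is normalmx.
Hypothesis gamma_min : forall a, eigenvalue N a -> gamma%:C <= a.
Hypothesis beta_max : forall a, eigenvalue N a -> a <= beta%:C.

(* In an orthonormal eigenbasis, [y^* N y] is a combination of the eigenvalues with
   the weights [|z_j|^2] whose sum is [y^* y]. *)
Lemma quad_form_bounds (y : 'cV[R[i]]_d) :
  gamma%:C * (ctrmx y *m y) 0 0 <= (ctrmx y *m N *m y) 0 0 <= beta%:C * (ctrmx y *m y) 0 0.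
Proof.
have /orthomx_spectralP NE := N_normal.
set U := spectralmx N in NE; set D := spectral_diag N in NE.
have U_unit : U \in unitmx := spectral_unit N.
have UiE : invmx U = ctrmx U by rewrite invmx_unitary ?ctrmxE // spectral_unitarymx.
have eigD j : eigenvalue N (D 0 j).
  apply/eigenvalueP; exists (row j U).
    rewrite [in LHS]NE !mulmxA -!row_mul mulmxV // mul1mx row_mul row_diag_mx.
    by rewrite -scalemxAl -rowE.
  apply/negP => /eqP rowj0.
  have : row j (U *m invmx U) = 0 by rewrite row_mul rowj0 mul0mx.
  by rewrite mulmxV // => /rowP/(_ j); rewrite !mxE eqxx /= => /eqP; rewrite oner_eq0.
pose z := U *m y.
have quadE : (ctrmx y *m N *m y) 0 0 = \sum_j D 0 j * ((z j 0)^* * z j 0).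
  rewrite [in LHS]NE UiE !mulmxA -ctrmx_mul -[ctrmx z *m _ *m U *m y]mulmxA.
  rewrite -/z mul_mx_diag !mxE; apply: eq_bigr => j _; rewrite !mxE.
  by rewrite [_ * D 0 j]mulrC mulrA.
have normE : (ctrmx y *m y) 0 0 = \sum_j ((z j 0)^* * z j 0).
  have -> : ctrmx y *m y = ctrmx z *m z.
    by rewrite /z ctrmx_mul -UiE mulmxA -[ctrmx y *m _ *m _]mulmxA mulVmx // mulmx1.
  by rewrite !mxE; apply: eq_bigr => j _; rewrite !mxE.
have z_ge0 j : 0 <= (z j 0)^* * z j 0 by rewrite mulrC; exact: mul_conjC_ge0.
rewrite quadE normE !mulr_sumr.
by apply/andP; split; apply: ler_sum => j _; apply: ler_wpM2r => //;
  [exact: gamma_min|exact: beta_max].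
Qed.

End rayleigh.

Section NAB_spectrum.
Context (R : realType) (d m : nat) (A : 'M[R[i]]_d) (B : 'I_m -> 'M[R[i]]_d).
Local Notation mx_letter := (mx_letter A B).
Local Notation N := (NAB A B).

Lemma NAB_sum : N = \sum_a ctrmx (mx_letter a) *m mx_letter a.
Proof. by rewrite /NAB sum_option. Qed.

Lemma NAB_normal : N \is normalmx.
Proof.
have N_herm : ctrmx N = N.
  by rewrite NAB_sum ctrmx_sum; apply: eq_bigr => a _; rewrite ctrmx_mul ctrmxK.
by apply/normalmxP; rewrite -ctrmxE N_herm.
Qed.

Lemma NAB_quad_form (y : 'cV[R[i]]_d) :
  (ctrmx y *m N *m y) 0 0 = (\sum_a vnorm2 (mx_letter a *m y))%:C.
Proof.
rewrite NAB_sum mulmx_sumr mulmx_suml summxE rmorph_sum; apply: eq_bigr => a _.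
transitivity ((ctrmx (mx_letter a *m y) *m (mx_letter a *m y)) 0 0).
  by rewrite ctrmx_mul !mulmxA.
exact: ctrmx_mul_self.
Qed.

Lemma sum_letter_vnorm2_bounds (gamma beta : R) :
  (forall a, eigenvalue N a -> gamma%:C <= a) ->
  (forall a, eigenvalue N a -> a <= beta%:C) ->
  forall y : 'cV[R[i]]_d,
  gamma * vnorm2 y <= \sum_a vnorm2 (mx_letter a *m y) <= beta * vnorm2 y.
Proof.
move=> gamma_min beta_max y.
have := quad_form_bounds NAB_normal gamma_min beta_max y.
by rewrite NAB_quad_form ctrmx_mul_self -!rmorphM /= !lec_real.
Qed.

Lemma NAB_eigenvalue_ge0 (gamma : R) : eigenvalue N gamma%:C -> 0 <= gamma.
Proof.
move=> /eigenvalueP [v vN v_neq0].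
pose y := ctrmx v.
have y_neq0 : vnorm2 y != 0.
  apply/negP => /eqP /vnorm2_eq0 y0; move/eqP: v_neq0; apply.
  by rewrite -[v]ctrmxK -/y y0; apply/matrixP => i j; rewrite !mxE conjc0.
have : (ctrmx y *m N *m y) 0 0 = gamma%:C * (ctrmx y *m y) 0 0.
  by rewrite /y ctrmxK vN -scalemxAl mxE.
rewrite NAB_quad_form ctrmx_mul_self -rmorphM => /complexI gammaE.
have : 0 <= gamma * vnorm2 y.
  by rewrite -gammaE sumr_ge0 // => a _; exact: vnorm2_ge0.
by rewrite pmulr_lge0 // lt_neqAle eq_sym y_neq0 vnorm2_ge0.
Qed.

Section geometric_bounds.
Variables (gamma beta : R).
Hypothesis gamma_min : forall a, eigenvalue N a -> gamma%:C <= a.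
Hypothesis beta_max : forall a, eigenvalue N a -> a <= beta%:C.

Lemma sum_word_vnorm2S_bounds (u : 'cV[R[i]]_d) n :
  gamma * (\sum_(w : word m n) vnorm2 (mx_word A B w *m u)) <=
     \sum_(w : word m n.+1) vnorm2 (mx_word A B w *m u) <=
  beta * (\sum_(w : word m n) vnorm2 (mx_word A B w *m u)).
Proof.
have -> : \sum_(w : word m n.+1) vnorm2 (mx_word A B w *m u) =
    \sum_(w : word m n) \sum_a vnorm2 (mx_letter a *m (mx_word A B w *m u)).
  rewrite sum_word_succ exchange_big; apply: eq_bigr => w _; apply: eq_bigr => a _ /=.
  by rewrite mulmxA.
have bounds (w : word m n) := sum_letter_vnorm2_bounds gamma_min beta_max (mx_word A B w *m u).
rewrite !mulr_sumr; apply/andP; split; apply: ler_sum => w _; by have /andP[] := bounds w.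
Qed.

Lemma sum_word_vnorm2_bounds (u : 'cV[R[i]]_d) n : 0 <= gamma -> 0 <= beta ->
  vnorm2 u * gamma ^+ n <= \sum_(w : word m n) vnorm2 (mx_word A B w *m u) <=
  vnorm2 u * beta ^+ n.
Proof.
move=> gamma_ge0 beta_ge0.
elim: n => [|n /andP[IHlo IHhi]]; first by rewrite !expr0 !mulr1 sum_unit /= mul1mx lexx.
have /andP[lo hi] := sum_word_vnorm2S_bounds u n.
rewrite !exprS (mulrCA _ gamma) (mulrCA _ beta).
by rewrite (le_trans (ler_wpM2l gamma_ge0 IHlo) lo) (le_trans hi (ler_wpM2l beta_ge0 IHhi)).
Qed.

End geometric_bounds.
End NAB_spectrum.

Theorem proposition2p1 (R : realType) (dm : measure_display) (T : measurableType dm)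
  (P : probability T R) (d m : nat)
  (A : 'M[R[i]]_d) (B : 'I_m -> 'M[R[i]]_d)
  (xi : nat -> 'I_m -> T -> R)
  (xi_meas : forall n k, (0 < n)%N -> measurable_fun setT (xi n k))
  (xi_indep : mutually_independent P (fun nk : nat * 'I_m => (0 < nk.1)%N)
                (fun nk => xi nk.1 nk.2))
  (xi_int : forall n k, (0 < n)%N -> P.-integrable setT (fun t => (xi n k t)%:E))
  (xi_int2 : forall n k, (0 < n)%N -> P.-integrable setT (fun t => (xi n k t ^+ 2)%:E))
  (xi_mean : forall n k, (0 < n)%N -> Rintegral P setT (xi n k) = 0)
  (xi_var : forall n k, (0 < n)%N -> Rintegral P setT (fun t => xi n k t ^+ 2) = 1)
  (u v : 'cV[R[i]]_d) (gamma beta : R)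
  (gamma_eig : eigenvalue (NAB A B) gamma%:C)
  (gamma_min : forall a : R[i], eigenvalue (NAB A B) a -> gamma%:C <= a)
  (beta_eig : eigenvalue (NAB A B) beta%:C)
  (beta_max : forall a : R[i], eigenvalue (NAB A B) a -> a <= beta%:C) :
  let x := sproc A B xi u in
  let y := sproc A B xi v in
  let U := fun n => vec (Vmat P x y n) in
  let r_x := fun n => Rintegral P setT (fun t => vnorm2 (x n t)) in
  (forall n : nat, U n = (DAB A B) ^+ n *m U 0%N) /\
  (forall n : nat, vnorm2 u * gamma ^+ n <= r_x n /\ r_x n <= vnorm2 u * beta ^+ n).
Proof.
move=> x y U r_x; split => n.
  rewrite /U /x /y !(Vmat_expansion xi_meas xi_indep xi_int xi_int2 xi_mean xi_var).
  exact: vec_word_covariance.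
have gamma_ge0 := NAB_eigenvalue_ge0 gamma_eig.
have beta_ge0 : 0 <= beta.
  by apply: le_trans gamma_ge0 _; have := beta_max _ gamma_eig; rewrite lec_real.
rewrite /r_x /x (second_moment_expansion xi_meas xi_indep xi_int xi_int2 xi_mean xi_var).
by apply/andP; exact: sum_word_vnorm2_bounds.
Qed.
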